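(* Let $C$ be a convex cone in a topological real vector space and $f:C\to\mathbb{R}$ a non-negative function that is positively homogeneous of degree $\alpha>0$. If $f$ is strictly sub-convex, then $f$ is continuous on $\mathrm{ri}(C)$. In particular, if $C=V$ is the whole space, $f$ strictly sub-convex implies $f$ continuous.
   Context: Topological real vector spaces are not assumed Hausdorff. A cone is a subset $C$ with $\lambda C\subseteq C$ for all $\lambda>0$. $f$ is positively homogeneous of degree $\alpha$ if $f(\lambda x)=\lambda^{\alpha}f(x)$ for all $x\in C$, $\lambda>0$. $S_r(f)=\{x\in C: f(x)\le r\}$. For a subset $S$, $\mathrm{Aff}(S)$ is its affine hull; $\mathrm{ri}(S)$, $\mathrm{rc}(S)$ are the interior and closure of $S$ in the subspace topology of $\mathrm{Aff}(S)$. $]x,y[=\{(1-t)x+ty: t\in[0,1]\}\setminus\{x,y\}$. A set $C$ is strictly convex if for any two distinct $x,y\in\mathrm{rc}(C)$, $]x,y[\subseteq\mathrm{ri}(C)$. $f$ is strictly sub-convex if $S_r(f)$ is strictly convex for every $r\in\mathbb{R}$. *)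

From HB Require Import structures.
From mathcomp Require Import all_boot all_order all_algebra.
From mathcomp Require Import all_classical all_reals all_analysis.
Set Implicit Arguments. Unset Strict Implicit. Unset Printing Implicit Defensive.
Import Order.TTheory GRing.Theory Num.Theory.
Local Open Scope classical_set_scope.
Local Open Scope ring_scope.

Section Defs.
Context {R : realType} {V : topologicalLmodType R}.

Definition convex_set_in (S : set V) : Prop :=
  forall x y (t : R), S x -> S y -> 0 <= t <= 1 -> S ((1 - t) *: x + t *: y).

Definition is_cone (C : set V) : Prop :=
  forall (l : R) x, 0 < l -> C x -> C (l *: x).

Definition affine_set (A : set V) : Prop :=
  forall x y (t : R), A x -> A y -> A ((1 - t) *: x + t *: y).

Definition aff (S : set V) : set V :=
  \bigcap_(A in [set A : set V | affine_set A /\ S `<=` A]) A.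

(* relative interior: interior of S in the subspace topology of aff S *)
Definition ri (S : set V) : set V :=
  [set x | S x /\ exists U : set V, [/\ open U, U x & U `&` aff S `<=` S]].

(* relative closure: closure of S in the subspace topology of aff S *)
Definition rc (S : set V) : set V :=
  [set x | aff S x /\
     forall U : set V, open U -> U x -> (U `&` aff S) `&` S !=set0].

Definition open_seg (x y : V) : set V :=
  [set z | exists2 t : R, 0 <= t <= 1 & z = (1 - t) *: x + t *: y]
  `\` [set x; y].

Definition strictly_convex (S : set V) : Prop :=
  forall x y, rc S x -> rc S y -> x <> y -> open_seg x y `<=` ri S.

Definition sublevel (C : set V) (f : V -> R) (r : R) : set V :=
  [set x | C x /\ f x <= r].

Definition strictly_subconvex (C : set V) (f : V -> R) : Prop :=
  forall r : R, strictly_convex (sublevel C f r).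

Definition pos_homogeneous (C : set V) (f : V -> R) (alpha : R) : Prop :=
  forall (l : R) x, 0 < l -> C x -> f (l *: x) = l `^ alpha * f x.

End Defs.

From HB Require Import structures.
From mathcomp Require Import all_boot all_order all_algebra.
From mathcomp Require Import all_classical all_reals all_analysis.
From mathcomp Require Import ring lra.
Import Order.TTheory GRing.Theory Num.Theory.
Import numFieldNormedType.Exports.
Local Open Scope classical_set_scope.
Local Open Scope ring_scope.

(* Sublevel sets S_r = {x in C | f x <= r} are homothetic: by homogeneity,
   l *: S_r = S_(l^a r).  Upper semicontinuity on ri C: if f x < r, then x lies
   strictly between two points of S_r on the ray through x (for x = 0, on a line
   through 0 inside C), so x is in ri S_r by strict convexity; since C is
   contained in the affine hull of S_r, a neighbourhood of x in C lies in S_r.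
   Lower semicontinuity on C: if x is in the closure of S_r, then x/2 and l x
   (l > 1) lie in the relative closure of S_r' for any r' > r, hence x is in
   ri S_r' and f x <= r'. *)

Section PowRScaling.
Context {R : realType}.
Implicit Types a b c M : R.

Lemma powRVK a b : 0 < a -> 0 <= b -> (b `^ a^-1) `^ a = b.
Proof. by move=> a0 b0; rewrite -powRrM mulVf ?gt_eqF // powRr1. Qed.

Lemma powR_gt1 {a b} : 0 < a -> 1 < b -> 1 < b `^ a.
Proof.
move=> a0 b1; have := gt0_ltr_powR a0 (x := 1) (y := b).
by rewrite powR1 => ->; rewrite ?nnegrE // ltW // (lt_trans ltr01).
Qed.

Lemma powR_le1 {a b} : 0 <= a -> 0 <= b <= 1 -> b `^ a <= 1.
Proof.
move=> a0 /andP[b0 b1]; have := ge0_ler_powR a0 (x := b) (y := 1).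
by rewrite powR1 => ->; rewrite ?nnegrE.
Qed.

Lemma exists_powR_mul_le {a M c} : 0 < a -> 0 <= M -> 0 < c ->
  exists2 l, 0 < l & l `^ a * M <= c.
Proof.
move=> a0 M0 c0; exists ((c / (M + c)) `^ a^-1).
  by rewrite powR_gt0 // divr_gt0 ?ltr_wpDl.
rewrite powRVK //; last by rewrite divr_ge0 ?addr_ge0 // ltW.
by rewrite mulrAC ler_pdivrMr ?ltr_wpDl // ler_pM2l // lerDl ltW.
Qed.

Lemma exists_powR_gt1_mul_le {a M c} : 0 < a -> 0 <= M -> M < c ->
  exists2 l, 1 < l & l `^ a * M <= c.
Proof.
move=> a0 M0 Mc; have Mc0 : 0 < M + c by lra.
exists ((2 * c / (M + c)) `^ a^-1).
  by apply: powR_gt1; rewrite ?invr_gt0 // ltr_pdivlMr // mul1r; lra.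
rewrite powRVK //; last by rewrite divr_ge0 // ltW //; lra.
by rewrite mulrAC ler_pdivrMr //; nra.
Qed.
End PowRScaling.

Section RelativeInterior.
Context {R : realType} {V : topologicalLmodType R}.
Implicit Types (S : set V) (x y : V) (c d t : R).

Lemma tvs_scaler_continuous c : continuous (fun x : V => c *: x).
Proof.
move=> x; apply: (@continuous_comp _ (R^o * V)%type _ (pair c) (fun z => z.1 *: z.2)).
  exact: (cvg_pair (cvg_cst _) cvg_id).
exact: scale_continuous.
Qed.

Lemma tvs_scalel_continuous x : continuous (fun c : R => c *: x).
Proof.
move=> c; apply: (@continuous_comp _ (R^o * V)%type _ (pair^~ x) (fun z => z.1 *: z.2)).
  exact: (cvg_pair cvg_id (cvg_cst _)).
exact: scale_continuous.
Qed.

Lemma nbhs0_scaleN y {U : set V} : nbhs 0 U -> exists2 s : R, 0 < s & U (- s *: y).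
Proof.
move=> U0; have : \forall c \near 0, U (c *: y).
  by apply: tvs_scalel_continuous; rewrite scale0r.
move=> /nbhs_ballP[e /= e0 He]; exists (e / 2); first by rewrite divr_gt0.
by apply: He; rewrite /ball /= sub0r opprK ger0_norm ?divr_ge0 ?ltW //; lra.
Qed.

Lemma scalerIf {x c d} : x != 0 -> c *: x = d *: x -> c = d.
Proof.
move=> x0 /eqP; rewrite -subr_eq0 -scalerBl scaler_eq0 (negPf x0) orbF subr_eq0.
by move/eqP.
Qed.

Lemma comb_subl x y t : (1 - t) *: x + t *: y - x = t *: (y - x).
Proof. by rewrite scalerBl scale1r scalerBr addrAC (addrAC x) subrr add0r addrC. Qed.

Lemma comb_subr x y t : (1 - t) *: x + t *: y - y = (1 - t) *: (x - y).
Proof. by rewrite -comb_subl subKr (addrC (t *: y)). Qed.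

Lemma sub_aff {S x} : S x -> aff S x.
Proof. by move=> Sx A [_]; apply. Qed.

Lemma aff_comb {S x y} t : aff S x -> aff S y -> aff S ((1 - t) *: x + t *: y).
Proof. by move=> Sx Sy A /= AS; apply: AS.1; [apply: Sx | apply: Sy]. Qed.

Lemma aff_scale {S x} c d : c != 1 -> aff S x -> aff S (c *: x) -> aff S (d *: x).
Proof.
move=> c1 Sx Scx; have c10 : 1 - c != 0 by rewrite subr_eq0 eq_sym.
have -> : d *: x = (1 - (1 - d) / (1 - c)) *: x + ((1 - d) / (1 - c)) *: (c *: x).
  by rewrite scalerA -scalerDl; congr (_ *: _); field.
exact: aff_comb.
Qed.

Lemma sub_rc {S x} : S x -> rc S x.
Proof.
move=> Sx; split; first exact: sub_aff.
by move=> U _ Ux; exists x; split; first split; [|exact: sub_aff|].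
Qed.

Lemma ri_setT : ri [set: V] = [set: V].
Proof. by apply/seteqP; split=> // x _; split=> //; exists setT; split=> //; exact: openT. Qed.

Lemma strictly_convex_ri {S x y t} : strictly_convex S -> rc S x -> rc S y -> x <> y ->
  0 < t < 1 -> ri S ((1 - t) *: x + t *: y).
Proof.
move=> scS Sx Sy xy /andP[t0 t1]; apply: (scS _ _ Sx Sy xy); split.
  by exists t => //; rewrite !ltW.
have xy0 : x - y != 0 by rewrite subr_eq0; apply/eqP.
have zx : (1 - t) *: x + t *: y - x != 0.
  by rewrite comb_subl scaler_eq0 negb_or gt_eqF //= -opprB oppr_eq0.
have zy : (1 - t) *: x + t *: y - y != 0.
  by rewrite comb_subr scaler_eq0 negb_or subr_eq0 eq_sym lt_eqF.
by move=> /= [] E; [move: zx | move: zy]; rewrite E subrr eqxx.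
Qed.

Lemma strictly_convex_ri_scale {S x l} : strictly_convex S -> x != 0 -> 1 < l ->
  rc S (2^-1 *: x) -> rc S (l *: x) -> ri S x.
Proof.
move=> scS x0 l1 Shx Slx.
have -> : x = (1 - (2 * l - 1)^-1) *: (2^-1 *: x) + (2 * l - 1)^-1 *: (l *: x).
  rewrite !scalerA -scalerDl -[LHS]scale1r; congr (_ *: _); field; lra.
apply: strictly_convex_ri => //; first by move/(scalerIf x0); lra.
by rewrite invr_gt0 invf_lt1; lra.
Qed.
End RelativeInterior.

Section HomogeneousSublevels.
Context {R : realType} {V : topologicalLmodType R}.
Variables (C : set V) (f : V -> R) (a : R).
Hypotheses (coneC : is_cone C) (f_ge0 : forall x, C x -> 0 <= f x) (a_gt0 : 0 < a)
  (homf : pos_homogeneous C f a).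

Lemma pos_homogeneous_f0 : C 0 -> f 0 = 0.
Proof.
move=> C0; have := homf 2 0 (ltr0Sn _ 1) C0; rewrite scaler0 => f0E.
have := powR_gt1 a_gt0 (ltr1n R 2); have := f_ge0 _ C0; nra.
Qed.

Lemma sublevel_scale {r l x} : 0 < l -> l `^ a * f x <= r -> C x ->
  sublevel C f r (l *: x).
Proof. by move=> l0 lr Cx; split; [exact: coneC | rewrite homf]. Qed.

Lemma sublevel_shrink {r l x} : 0 < l <= 1 -> sublevel C f r x -> sublevel C f r (l *: x).
Proof.
move=> /andP[l0 l1] [Cx fx]; apply: sublevel_scale => //; apply: le_trans fx.
by rewrite ler_piMl ?f_ge0 // powR_le1 ?(ltW a_gt0) // (ltW l0) l1.
Qed.

Lemma aff_sublevel {r} : 0 < r -> C `<=` aff (sublevel C f r).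
Proof.
move=> r0 x Cx; have [l l0 lx] := exists_powR_mul_le a_gt0 (f_ge0 _ Cx) r0.
have Slx := sublevel_scale l0 lx Cx.
have Shx : sublevel C f r (2^-1 *: (l *: x)).
  by apply: sublevel_shrink => //; apply/andP; split; lra.
have -> : x = l^-1 *: (l *: x) by rewrite scalerA mulVf ?scale1r // gt_eqF.
by apply: (aff_scale 2^-1); [rewrite lt_eqF //; lra | exact: sub_aff ..].
Qed.

Lemma ri_sublevel_le_near {r x} : 0 < r -> ri (sublevel C f r) x ->
  \forall y \near x, C y -> f y <= r.
Proof.
move=> r0 [_ [U [oU Ux USr]]]; apply: filterS (open_nbhs_nbhs (conj oU Ux)) => y Uy Cy.
by case: (USr y (conj Uy (aff_sublevel r0 _ Cy))).
Qed.

Hypothesis scf : strictly_subconvex C f.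

Lemma ri_sublevel_neq0 {r x} : C x -> x != 0 -> f x < r -> ri (sublevel C f r) x.
Proof.
move=> Cx x0 fxr; have fx0 := f_ge0 _ Cx.
have [l l1 lx] := exists_powR_gt1_mul_le a_gt0 fx0 fxr.
apply: (strictly_convex_ri_scale (scf r) x0 l1); apply: sub_rc.
  by apply: sublevel_shrink; [apply/andP; split; lra | split=> //; exact: ltW].
by apply: sublevel_scale => //; lra.
Qed.

Lemma ri_sublevel0 {r y} : 0 < r -> ri C 0 -> C y -> y != 0 -> ri (sublevel C f r) 0.
Proof.
move=> r0 [C0 [U [oU U0 UC]]] Cy y0.
have [s s0 Usy] := nbhs0_scaleN y (open_nbhs_nbhs (conj oU U0)).
have Csy : C (- s *: y).
  apply: UC; split=> //.
  by have := aff_comb (- s) (sub_aff C0) (sub_aff Cy); rewrite scaler0 add0r.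
have [fsy0 fy0] := (f_ge0 _ Csy, f_ge0 _ Cy).
have [l l0 lM] := exists_powR_mul_le a_gt0 (addr_ge0 fsy0 fy0) r0.
have la0 : 0 <= l `^ a by exact: powR_ge0.
have Sl1 : sublevel C f r (l *: (- s *: y)) by apply: sublevel_scale => //; nra.
have Sl2 : sublevel C f r (l *: y) by apply: sublevel_scale => //; nra.
have -> : (0 : V) = (1 - s / (1 + s)) *: (l *: (- s *: y)) + (s / (1 + s)) *: (l *: y).
  by rewrite !scalerA -scalerDl [X in X *: y](_ : _ = 0) ?scale0r //; field; lra.
apply: strictly_convex_ri (scf r) (sub_rc Sl1) (sub_rc Sl2) _ _.
  by rewrite scalerA => /(scalerIf y0); nra.
by rewrite divr_gt0 ?ltr_pdivrMr /=; lra.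
Qed.

Lemma le_near_ri {r x} : ri C x -> f x < r -> \forall y \near x, C y -> f y <= r.
Proof.
move=> rix fxr; have r0 : 0 < r := le_lt_trans (f_ge0 _ rix.1) fxr.
have [x0|x0] := eqVneq x 0; last first.
  exact/(ri_sublevel_le_near r0)/(ri_sublevel_neq0 rix.1 x0 fxr).
subst x; have [[y [Cy y0]]|C0] := pselect (exists y, C y /\ y != 0).
  exact/(ri_sublevel_le_near r0)/(ri_sublevel0 r0 rix Cy y0).
apply: nearW => y Cy; have -> : y = 0 by apply: contrapT => /eqP y0; apply: C0; exists y.
by rewrite pos_homogeneous_f0 ?(ltW r0) //; exact: rix.1.
Qed.

Lemma rc_sublevel_scale {r r' nu x} : 0 < r' -> 0 < nu -> nu `^ a * r <= r' -> C x ->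
  closure (sublevel C f r) x -> rc (sublevel C f r') (nu *: x).
Proof.
move=> r'0 nu0 nur Cx clx; split; first exact: aff_sublevel r'0 _ (coneC _ _ nu0 Cx).
move=> U oU Unx.
have : nbhs x ((fun z => nu *: z) @^-1` U).
  by apply: tvs_scaler_continuous; exact: open_nbhs_nbhs.
move=> /clx[y [[Cy fy] Uny]].
have Sny : sublevel C f r' (nu *: y).
  apply: sublevel_scale => //; apply: le_trans nur.
  by rewrite ler_wpM2l // powR_ge0.
by exists (nu *: y); split; first split; [|exact: sub_aff|].
Qed.

Lemma closure_sublevel_le {r x} : 0 < r -> C x -> closure (sublevel C f r) x -> f x <= r.
Proof.
move=> r0 Cx clx; rewrite leNgt; apply/negP => rfx.
have [x0|x0] := eqVneq x 0; first by subst x; rewrite pos_homogeneous_f0 // in rfx; lra.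
have [r' rr' r'fx] : exists2 r', r < r' & r' < f x by exists ((r + f x) / 2); lra.
have r'0 : 0 < r' by lra.
have [l l1 lr] := exists_powR_gt1_mul_le a_gt0 (ltW r0) rr'.
have half : 2^-1 `^ a * r <= r'.
  apply: le_trans (ltW rr'); rewrite ler_piMl ?(ltW r0) // powR_le1 ?(ltW a_gt0) //.
  by apply/andP; split; lra.
have h0 : (0 : R) < 2^-1 by lra.
have l0 : 0 < l by lra.
have [[_ fxr'] _] := strictly_convex_ri_scale (scf r') x0 l1
  (rc_sublevel_scale r'0 h0 half Cx clx) (rc_sublevel_scale r'0 l0 lr Cx clx).
lra.
Qed.

Lemma gt_near {r x} : 0 < r -> C x -> r < f x -> \forall y \near x, C y -> r < f y.
Proof.
move=> r0 Cx rfx; apply: contrapT => nnear.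
suff /(closure_sublevel_le r0 Cx) : closure (sublevel C f r) x by lra.
move=> B Bx; apply: contrapT => /forallNP AB0; apply: nnear.
apply: filterS Bx => y By Cy; rewrite ltNge; apply/negP => fy.
by apply: (AB0 y).
Qed.

Lemma dist_lt_near_ri {x e} : ri C x -> 0 < e -> \forall y \near x, C y -> `|f x - f y| < e.
Proof.
move=> rix e0; have fx0 := f_ge0 _ rix.1.
have upper := le_near_ri (r := f x + e / 2) rix ltac:(lra).
have lower : \forall y \near x, C y -> f x - e < f y.
  have [fxe|fxe] := ltP 0 (f x - e / 2).
    have := gt_near fxe rix.1 ltac:(lra).
    by apply: filterS => y fy Cy; have := fy Cy; lra.
  by apply: nearW => y Cy; have := f_ge0 _ Cy; lra.
apply: filterS2 upper lower => y fyu fyl Cy.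
have := fyu Cy; have := fyl Cy; rewrite ltr_distlC => ? ?; apply/andP; split; lra.
Qed.

End HomogeneousSublevels.

Theorem mainTheorem5 (R : realType) (V : topologicalLmodType R) :
  (forall (C : set V) (f : V -> R) (alpha : R),
      convex_set_in C -> is_cone C ->
      (forall x, C x -> 0 <= f x) ->
      0 < alpha -> pos_homogeneous C f alpha ->
      strictly_subconvex C f ->
      {within ri C, continuous f}) /\
  (forall (f : V -> R) (alpha : R),
      (forall x, 0 <= f x) ->
      0 < alpha -> pos_homogeneous setT f alpha ->
      strictly_subconvex setT f ->
      continuous f).
Proof.
split.
  move=> C f a _ coneC f_ge0 a0 homf scf; apply/subspace_continuousP => x rix.
  apply/cvgrPdist_lt => e e0; rewrite /within.
  have := dist_lt_near_ri _ _ _ coneC f_ge0 a0 homf scf rix e0.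
  by apply: filterS => y fy riy; exact: fy riy.1.
move=> f a f_ge0 a0 homf scf x; apply/cvgrPdist_lt => e e0.
have rix : ri [set: V] x by rewrite ri_setT.
have := dist_lt_near_ri _ _ _ (fun _ _ _ _ => I) (fun x _ => f_ge0 x) a0 homf scf rix e0.
by apply: filterS => y; apply.
Qed.
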